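(* There exist uncountably many pairwise non-isomorphic subgroups of $\mathrm{IET}$ that are generated by $3$ elements and are solvable of derived length exactly $3$.
   Context: $\mathrm{IET}$ denotes the group of interval exchange transformations of $[0,1)$: bijections of $[0,1)$ that are orientation-preserving piecewise isometries (piecewise translations), left-continuous, with finitely many discontinuity points. *)

From Stdlib Require Import Reals.
Open Scope R_scope.

Definition I01 : Type := { x : R | 0 <= x < 1 }.

Definition idI : I01 -> I01 := fun x => x.
Definition compI (f g : I01 -> I01) : I01 -> I01 := fun x => f (g x).

Definition is_IET (f : I01 -> I01) : Prop :=
  (exists g : I01 -> I01, (forall x, g (f x) = x) /\ (forall y, f (g y) = y)) /\
  exists (n : nat) (a t : nat -> R),
    a 0%nat = 0 /\ a n = 1 /\
    (forall i, (i < n)%nat -> a i < a (S i)) /\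
    (forall (x : I01) i, (i < n)%nat -> a i <= proj1_sig x < a (S i) ->
        proj1_sig (f x) = proj1_sig x + t i).

Definition fset := (I01 -> I01) -> Prop.

Inductive gen (S : fset) : fset :=
  | gen_base : forall f, S f -> gen S f
  | gen_id : gen S idI
  | gen_comp : forall f g, gen S f -> gen S g -> gen S (compI f g)
  | gen_inv : forall f h, gen S f -> compI h f = idI -> compI f h = idI -> gen S h.

Definition commutators (G : fset) : fset :=
  fun c => exists a b a' b', G a /\ G b /\
    compI a a' = idI /\ compI a' a = idI /\
    compI b b' = idI /\ compI b' b = idI /\
    c = compI a (compI b (compI a' b')).

Fixpoint derived (G : fset) (k : nat) : fset :=
  match k with
  | O => G
  | S k' => gen (commutators (derived G k'))
  end.

Definition trivial_set (G : fset) : Prop := forall f, G f <-> f = idI.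

Definition derived_length_eq (G : fset) (k : nat) : Prop :=
  trivial_set (derived G k) /\
  forall j, (j < k)%nat -> ~ trivial_set (derived G j).

Definition group_iso (G H : fset) : Prop :=
  exists phi : (I01 -> I01) -> (I01 -> I01),
    (forall f, G f -> H (phi f)) /\
    (forall f g, G f -> G g -> phi (compI f g) = compI (phi f) (phi g)) /\
    (forall f g, G f -> G g -> phi f = phi g -> f = g) /\
    (forall h, H h -> exists f, G f /\ phi f = h).

Definition IET_3gen (G : fset) : Prop :=
  exists g1 g2 g3, is_IET g1 /\ is_IET g2 /\ is_IET g3 /\
    forall f, G f <-> gen (fun h => h = g1 \/ h = g2 \/ h = g3) f.

Definition uncountable (J : Type) : Prop :=
  ~ exists e : J -> nat, forall x y, e x = e y -> x = y.

(* Regard [0,1) as three sheets over a base circle [0,1).  [Gamma b] is generated by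
   the rotation r of the base by alpha b and by two involutions a, c that swap sheets
   0,1 (resp. 1,2) above [0,1/16).  Every element is a skew product over a rotation
   with an S3-valued cocycle; commutators have trivial rotation part, commutators of
   those have values in the abelian group A3, so the derived length is at most 3,
   and [[a,c],[a,r]] <> 1 shows it is 3.  The base-8 digits b_m of alpha b are read
   off relations: a commutes with r^(8^(m+1)) c r^-(8^(m+1)) iff b_m = 1.  An
   isomorphism Gamma b ~ Gamma b' sends the generators to words, so b is determined
   by b' and a triple of words: isomorphism classes are countable, hence there are
   uncountably many of them. *)

From Stdlib Require Import Reals Lra Lia Cantor.
From Stdlib Require Import FunctionalExtensionality PropExtensionality ProofIrrelevance ClassicalEpsilon.
From Stdlib Require Import RelationClasses.
From Coquelicot Require Import Coquelicot.
Set Bullet Behavior "Strict Subproofs".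
Open Scope R_scope.

Lemma frac_part_range y : 0 <= frac_part y < 1.
Proof. destruct (base_fp y); lra. Qed.

Lemma frac_part_eq y k : 0 <= y - IZR k < 1 -> frac_part y = y - IZR k.
Proof.
  intros Hk. symmetry. apply (Int_part_frac_part_spec y k); [exact Hk | ring].
Qed.

Lemma frac_part_id y : 0 <= y < 1 -> frac_part y = y.
Proof. intros Hy. rewrite (frac_part_eq y 0); simpl; lra. Qed.

Lemma frac_part_addZ y n : frac_part (y + IZR n) = frac_part y.
Proof.
  pose proof (frac_part_range y) as Hy. unfold frac_part in Hy. unfold frac_part at 2.
  rewrite (frac_part_eq _ (Int_part y + n)); rewrite plus_IZR; lra.
Qed.

Lemma frac_part_add_frac y c : frac_part (frac_part y + c) = frac_part (y + c).
Proof.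
  unfold frac_part at 2.
  replace (y - IZR (Int_part y) + c) with (y + c + IZR (- Int_part y))
    by (rewrite opp_IZR; ring).
  apply frac_part_addZ.
Qed.

Lemma frac_part_sub_int y z t : frac_part (y - (IZR z + t)) = frac_part (y - t).
Proof.
  replace (y - (IZR z + t)) with (y - t + IZR (- z)) by (rewrite opp_IZR; ring).
  apply frac_part_addZ.
Qed.

(** * The symmetric group on three letters *)

Inductive perm3 := e3 | t01 | t02 | t12 | c012 | c021.

Definition perm3_app (p : perm3) (i : nat) : nat :=
  match p, i with
  | t01, 0%nat => 1 | t01, 1%nat => 0
  | t02, 0%nat => 2 | t02, 2%nat => 0
  | t12, 1%nat => 2 | t12, 2%nat => 1
  | c012, 0%nat => 1 | c012, 1%nat => 2 | c012, 2%nat => 0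
  | c021, 0%nat => 2 | c021, 1%nat => 0 | c021, 2%nat => 1
  | _, _ => i
  end.

(* A permutation of {0,1,2} is determined by the images of 0 and 1. *)
Definition perm3_of_images (x y : nat) : perm3 :=
  match x, y with
  | 1%nat, 0%nat => t01 | 2%nat, 1%nat => t02 | 0%nat, 2%nat => t12
  | 1%nat, 2%nat => c012 | 2%nat, 0%nat => c021 | _, _ => e3
  end.

Definition perm3_mul (p q : perm3) : perm3 :=
  perm3_of_images (perm3_app p (perm3_app q 0)) (perm3_app p (perm3_app q 1)).

Definition perm3_inv (p : perm3) : perm3 :=
  match p with c012 => c021 | c021 => c012 | _ => p end.

Definition perm3_even (p : perm3) : bool :=
  match p with e3 | c012 | c021 => true | _ => false end.

Definition perm3_commutator (p q : perm3) : perm3 :=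
  perm3_mul p (perm3_mul q (perm3_mul (perm3_inv p) (perm3_inv q))).

Lemma perm3_app_mul p q i : perm3_app (perm3_mul p q) i = perm3_app p (perm3_app q i).
Proof. destruct p, q; do 3 (destruct i as [|i]; try reflexivity). Qed.

Lemma perm3_app_lt p i : (i < 3)%nat -> (perm3_app p i < 3)%nat.
Proof. intros; destruct p; do 3 (destruct i as [|i]; simpl; try lia). Qed.

Lemma perm3_mul_1l p : perm3_mul e3 p = p. Proof. destruct p; reflexivity. Qed.
Lemma perm3_mul_1r p : perm3_mul p e3 = p. Proof. destruct p; reflexivity. Qed.
Lemma perm3_mul_inv_l p : perm3_mul (perm3_inv p) p = e3. Proof. destruct p; reflexivity. Qed.
Lemma perm3_mul_inv_r p : perm3_mul p (perm3_inv p) = e3. Proof. destruct p; reflexivity. Qed.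

Lemma perm3_even_mul p q :
  perm3_even p = true -> perm3_even q = true -> perm3_even (perm3_mul p q) = true.
Proof. destruct p, q; easy. Qed.

Lemma perm3_even_inv p : perm3_even p = true -> perm3_even (perm3_inv p) = true.
Proof. destruct p; easy. Qed.

Lemma perm3_even_commutator p q : perm3_even (perm3_commutator p q) = true.
Proof. destruct p, q; reflexivity. Qed.

Lemma perm3_commutator_even p q :
  perm3_even p = true -> perm3_even q = true -> perm3_commutator p q = e3.
Proof. destruct p, q; easy. Qed.

Lemma perm3_moves p : p <> e3 -> exists i, (i < 3)%nat /\ perm3_app p i <> i.
Proof.
  destruct p; intros Hp; try congruence;
    [exists 0%nat | exists 0%nat | exists 1%nat | exists 0%nat | exists 0%nat];
    simpl; split; lia.
Qed.

(** * Skew products over rotations *)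

(* A point p of [0,1) is viewed as the pair (base p, sheet p) of [0,1) x {0,1,2},
   with p = (base p + sheet p) / 3.  [point] is the inverse map, made total by
   reading y modulo 1 and clipping the sheet index at 2. *)
Definition sheet_of (v : R) : nat :=
  if Rlt_dec v (1/3) then 0 else if Rlt_dec v (2/3) then 1 else 2.

Definition sheet (p : I01) : nat := sheet_of (proj1_sig p).

Definition base (p : I01) : R := 3 * proj1_sig p - INR (sheet p).

Lemma I01_eq (p q : I01) : proj1_sig p = proj1_sig q -> p = q.
Proof. destruct p, q; simpl; intros ->; apply subset_eq_compat; reflexivity. Qed.

Lemma sheet_lt p : (sheet p < 3)%nat.
Proof. unfold sheet, sheet_of. destruct Rlt_dec; [lia|]. destruct Rlt_dec; lia. Qed.

Lemma base_range p : 0 <= base p < 1.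
Proof.
  unfold base, sheet, sheet_of. destruct p as [v hv]; simpl.
  destruct Rlt_dec; [simpl; lra|]. destruct Rlt_dec; simpl; lra.
Qed.

Lemma point_range y k : 0 <= (frac_part y + INR (Nat.min k 2)) / 3 < 1.
Proof.
  pose proof (frac_part_range y).
  assert (0 <= INR (Nat.min k 2) <= 2).
  { split; [apply pos_INR|]. replace 2 with (INR 2) by (simpl; lra). apply le_INR; lia. }
  lra.
Qed.

Definition point (y : R) (k : nat) : I01 := exist _ _ (point_range y k).

Lemma sheet_point y k : (k < 3)%nat -> sheet (point y k) = k.
Proof.
  intros Hk. pose proof (frac_part_range y).
  unfold sheet, sheet_of, point; simpl. replace (Nat.min k 2) with k by lia.
  destruct k as [|[|[|k]]]; simpl; repeat (destruct Rlt_dec; try lra); lia.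
Qed.

Lemma base_point y k : (k < 3)%nat -> base (point y k) = frac_part y.
Proof.
  intros Hk. unfold base. rewrite sheet_point by exact Hk. simpl.
  replace (Nat.min k 2) with k by lia. field.
Qed.

Lemma point_base p : point (base p) (sheet p) = p.
Proof.
  apply I01_eq; simpl. rewrite frac_part_id by apply base_range.
  pose proof (sheet_lt p). replace (Nat.min (sheet p) 2) with (sheet p) by lia.
  unfold base. field.
Qed.

Lemma point_eq y y' k : frac_part y = frac_part y' -> point y k = point y' k.
Proof. intros E; apply I01_eq; simpl; rewrite E; reflexivity. Qed.

Definition skew (c : R) (s : R -> perm3) : I01 -> I01 :=
  fun p => point (base p + c) (perm3_app (s (base p)) (sheet p)).

Lemma skew_val c s p :
  proj1_sig (skew c s p) =
  (frac_part (base p + c) + INR (perm3_app (s (base p)) (sheet p))) / 3.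
Proof.
  pose proof (perm3_app_lt (s (base p)) _ (sheet_lt p)).
  simpl. do 3 f_equal. lia.
Qed.

Lemma skew_comp c s d t :
  compI (skew c s) (skew d t) =
  skew (d + c) (fun x => perm3_mul (s (frac_part (x + d))) (t x)).
Proof.
  apply functional_extensionality; intros p. unfold compI, skew.
  pose proof (perm3_app_lt (t (base p)) _ (sheet_lt p)).
  rewrite sheet_point, base_point, perm3_app_mul by assumption.
  apply point_eq. rewrite frac_part_add_frac, Rplus_assoc. reflexivity.
Qed.

Lemma skew_ext c s s' : (forall x, 0 <= x < 1 -> s x = s' x) -> skew c s = skew c s'.
Proof.
  intros H. apply functional_extensionality; intros p. unfold skew.
  rewrite H by apply base_range. reflexivity.
Qed.

Lemma skew_id : skew 0 (fun _ => e3) = idI.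
Proof.
  apply functional_extensionality; intros p. unfold skew, idI. simpl.
  rewrite Rplus_0_r. apply point_base.
Qed.

Lemma skew_neq_id s x : 0 <= x < 1 -> s x <> e3 -> skew 0 s <> idI.
Proof.
  intros Hx Hs E. destruct (perm3_moves _ Hs) as (i & Hi & Hmove).
  pose proof (perm3_app_lt (s x) i Hi).
  pose proof (f_equal (fun f => proj1_sig (f (point x i))) E) as E'.
  cbv beta in E'. rewrite skew_val, sheet_point, base_point in E' by assumption.
  unfold idI in E'; simpl in E'.
  rewrite Rplus_0_r, !(frac_part_id x Hx) in E'.
  replace (Nat.min i 2) with i in E' by lia.
  apply Hmove, INR_eq. lra.
Qed.

Definition skew_inv (c : R) (s : R -> perm3) : I01 -> I01 :=
  skew (- c) (fun x => perm3_inv (s (frac_part (x - c)))).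

Lemma skew_comp_inv_r c s : compI (skew c s) (skew_inv c s) = idI.
Proof.
  unfold skew_inv. rewrite skew_comp, <- skew_id, Rplus_opp_l.
  apply skew_ext; intros x _. apply perm3_mul_inv_r.
Qed.

Lemma skew_comp_inv_l c s : compI (skew_inv c s) (skew c s) = idI.
Proof.
  unfold skew_inv. rewrite skew_comp, <- skew_id, Rplus_opp_r.
  apply skew_ext; intros x Hx. unfold Rminus.
  rewrite frac_part_add_frac, Rplus_assoc, Rplus_opp_r, Rplus_0_r, frac_part_id by exact Hx.
  apply perm3_mul_inv_l.
Qed.

Lemma left_inv_eq_right_inv (f h g : I01 -> I01) :
  compI h f = idI -> compI f g = idI -> h = g.
Proof.
  intros Hl Hr. apply functional_extensionality; intros x.
  pose proof (equal_f Hl (g x)) as El. pose proof (equal_f Hr x) as Er.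
  unfold compI, idI in El, Er. rewrite <- El, Er. reflexivity.
Qed.

Lemma skew_inv_unique c s h : compI h (skew c s) = idI -> h = skew_inv c s.
Proof. intros H. exact (left_inv_eq_right_inv _ _ _ H (skew_comp_inv_r c s)). Qed.

Lemma skew0_comp s t :
  compI (skew 0 s) (skew 0 t) = skew 0 (fun x => perm3_mul (s x) (t x)).
Proof.
  rewrite skew_comp, Rplus_0_r. apply skew_ext; intros x Hx.
  rewrite Rplus_0_r, frac_part_id by exact Hx. reflexivity.
Qed.

Lemma skew0_inv s : skew_inv 0 s = skew 0 (fun x => perm3_inv (s x)).
Proof.
  unfold skew_inv. rewrite Ropp_0. apply skew_ext; intros x Hx.
  rewrite Rminus_0_r, frac_part_id by exact Hx. reflexivity.
Qed.

Definition subgroup (X : fset) : Prop :=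
  X idI /\ (forall f g, X f -> X g -> X (compI f g)) /\
  (forall f h, X f -> compI h f = idI -> compI f h = idI -> X h).

Lemma gen_subgroup S : subgroup (gen S).
Proof. repeat split; [apply gen_id | apply gen_comp | eapply gen_inv]. Qed.

Lemma gen_min (S X : fset) : subgroup X -> (forall f, S f -> X f) -> forall f, gen S f -> X f.
Proof. intros (H1 & H2 & H3) HS f Hf. induction Hf; eauto. Qed.

Lemma commutators_mono (X Y : fset) :
  (forall f, X f -> Y f) -> forall f, commutators X f -> commutators Y f.
Proof.
  intros HXY f (a & b & a' & b' & Ha & Hb & E). exists a, b, a', b'. auto.
Qed.

Lemma commutators_sub X : subgroup X -> forall f, commutators X f -> X f.
Proof.
  intros (H1 & H2 & H3) f (a & b & a' & b' & Ha & Hb & E1 & E2 & E3 & E4 & ->).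
  apply H2; auto. apply H2; auto. apply H2; eauto.
Qed.

Lemma derived_subgroup G k : subgroup G -> subgroup (derived G k).
Proof. intros H; destruct k; [exact H | apply gen_subgroup]. Qed.

Lemma derived_antitone G j k :
  subgroup G -> (j <= k)%nat -> forall f, derived G k f -> derived G j f.
Proof.
  intros HG Hjk. induction Hjk as [|k _ IH]; intros f Hf; [exact Hf|].
  apply IH. eapply gen_min; [| | exact Hf].
  - apply derived_subgroup, HG.
  - apply commutators_sub, derived_subgroup, HG.
Qed.

Lemma derived_nontrivial_below G k :
  subgroup G -> ~ trivial_set (derived G k) ->
  forall j, (j <= k)%nat -> ~ trivial_set (derived G j).
Proof.
  intros HG Hk j Hjk Hj. apply Hk. intros f. split.
  - intros Hf. apply Hj. exact (derived_antitone G j k HG Hjk f Hf).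
  - intros ->. apply (derived_subgroup G k HG).
Qed.

Lemma derived_incl G (X : nat -> fset) :
  (forall k, subgroup (X k)) -> (forall f, G f -> X 0%nat f) ->
  (forall k f, commutators (X k) f -> X (S k) f) ->
  forall k f, derived G k f -> X k f.
Proof.
  intros HX H0 Hcomm k. induction k as [|k IH]; [exact H0|].
  apply gen_min; [apply HX|]. intros f Hf.
  apply Hcomm. exact (commutators_mono _ _ IH f Hf).
Qed.

Definition skew_layer (k : nat) : fset :=
  match k with
  | 0%nat => fun f => exists c s, f = skew c s
  | 1%nat => fun f => exists s, f = skew 0 s
  | 2%nat => fun f => exists s, (forall x, perm3_even (s x) = true) /\ f = skew 0 s
  | _ => fun f => f = idI
  end.

Lemma skew_layer_subgroup k : subgroup (skew_layer k).
Proof.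
  destruct k as [|[|[|k]]]; simpl; (split; [|split]).
  - exists 0, (fun _ => e3). symmetry; apply skew_id.
  - intros f g (c & s & ->) (d & t & ->). rewrite skew_comp. eauto.
  - intros f h (c & s & ->) H _. rewrite (skew_inv_unique _ _ _ H). unfold skew_inv. eauto.
  - exists (fun _ => e3). symmetry; apply skew_id.
  - intros f g (s & ->) (t & ->). rewrite skew0_comp. eauto.
  - intros f h (s & ->) H _. rewrite (skew_inv_unique _ _ _ H), skew0_inv. eauto.
  - exists (fun _ => e3). split; [reflexivity|]. symmetry; apply skew_id.
  - intros f g (s & Hs & ->) (t & Ht & ->). rewrite skew0_comp.
    eexists; split; [|reflexivity]. intros x; apply perm3_even_mul; auto.
  - intros f h (s & Hs & ->) H _. rewrite (skew_inv_unique _ _ _ H), skew0_inv.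
    eexists; split; [|reflexivity]. intros x; apply perm3_even_inv; auto.
  - reflexivity.
  - intros f g -> ->. reflexivity.
  - intros f h -> H _. exact H.
Qed.

Lemma commutators_skew_layer k f : commutators (skew_layer k) f -> skew_layer (S k) f.
Proof.
  intros (a & b & a' & b' & Ha & Hb & _ & Ea & _ & Eb & ->).
  destruct k as [|[|[|k]]]; simpl in Ha, Hb |- *.
  - destruct Ha as (ca & s & ->), Hb as (cb & t & ->).
    rewrite (skew_inv_unique _ _ _ Ea), (skew_inv_unique _ _ _ Eb). unfold skew_inv.
    rewrite !skew_comp. eexists. f_equal; [ring | reflexivity].
  - destruct Ha as (s & ->), Hb as (t & ->).
    rewrite (skew_inv_unique _ _ _ Ea), (skew_inv_unique _ _ _ Eb), !skew0_inv, !skew0_comp.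
    eexists; split; [|reflexivity]. intros x; apply perm3_even_commutator.
  - destruct Ha as (s & Hs & ->), Hb as (t & Ht & ->).
    rewrite (skew_inv_unique _ _ _ Ea), (skew_inv_unique _ _ _ Eb), !skew0_inv, !skew0_comp.
    rewrite <- skew_id. apply skew_ext; intros x _. apply perm3_commutator_even; auto.
  - subst a b. change (a' = idI) in Ea. change (b' = idI) in Eb. subst. reflexivity.
Qed.

Lemma commutators_skew0 (X : fset) s t : X (skew 0 s) -> X (skew 0 t) ->
  commutators X (skew 0 (fun x => perm3_commutator (s x) (t x))).
Proof.
  intros Hs Ht. exists (skew 0 s), (skew 0 t), (skew_inv 0 s), (skew_inv 0 t).
  repeat split; auto using skew_comp_inv_r, skew_comp_inv_l.
  rewrite !skew0_inv, !skew0_comp. reflexivity.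
Qed.

Lemma derived_skew_3 G : (forall f, G f -> skew_layer 0 f) -> trivial_set (derived G 3).
Proof.
  intros HG f. split.
  - apply (derived_incl G skew_layer skew_layer_subgroup HG commutators_skew_layer 3).
  - intros ->. apply gen_id.
Qed.

(** * Rotation numbers coding a binary sequence *)

Definition digit (x : bool) : R := if x then 1 else 0.

Definition tail_term (b : nat -> bool) (m j : nat) : R := digit (b (m + j)%nat) * (/8) ^ S j.

Definition tail (b : nat -> bool) (m : nat) : R := Series (tail_term b m).

(* In base 8, alpha b = 0.1 b_0 b_1 b_2 ..., so that 8^(m+1) alpha b = tail b m mod 1. *)
Definition alpha (b : nat -> bool) : R := /8 + tail b 0 / 8.

Lemma is_series_geom8 : is_series (fun j => (/8) ^ S j) (1/7).
Proof.
  replace (1/7) with (/8 * / (1 - /8)) by field.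
  apply (is_series_scal_l (/8) (fun n => (/8) ^ n)).
  apply is_series_geom. rewrite Rabs_pos_eq; lra.
Qed.

Lemma tail_term_bounds b m j : 0 <= tail_term b m j <= (/8) ^ S j.
Proof.
  unfold tail_term. assert (0 <= (/8) ^ S j) by (apply pow_le; lra).
  destruct (b (m + j)%nat); simpl digit; lra.
Qed.

Lemma ex_series_tail_term b m : ex_series (tail_term b m).
Proof.
  apply (@ex_series_le R_AbsRing R_CompleteNormedModule _ (fun j => (/8) ^ S j));
    [| eexists; apply is_series_geom8].
  intros n. change (norm (tail_term b m n)) with (Rabs (tail_term b m n)).
  pose proof (tail_term_bounds b m n). rewrite Rabs_pos_eq; lra.
Qed.

Lemma tail_bounds b m : 0 <= tail b m <= 1/7.
Proof.
  split.
  - replace 0 with (Series (fun n => 0 * tail_term b m n)) by (rewrite Series_scal_l; ring).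
    apply Series_le; [|apply ex_series_tail_term].
    intros n. pose proof (tail_term_bounds b m n). lra.
  - rewrite <- (is_series_unique _ _ is_series_geom8).
    apply Series_le; [apply tail_term_bounds | eexists; apply is_series_geom8].
Qed.

Lemma tail_succ b m : tail b m = digit (b m) / 8 + tail b (S m) / 8.
Proof.
  unfold tail. rewrite Series_incr_1 by apply ex_series_tail_term.
  unfold tail_term at 1. rewrite Nat.add_0_r.
  replace (Series (fun k => tail_term b m (S k))) with (Series (fun k => /8 * tail_term b (S m) k)).
  - rewrite Series_scal_l. simpl. field.
  - apply Series_ext. intros k. unfold tail_term. rewrite Nat.add_succ_r. simpl. ring.
Qed.

Lemma alpha_range b : 1/8 <= alpha b <= 1/8 + 1/56.
Proof. unfold alpha. pose proof (tail_bounds b 0). lra. Qed.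

Lemma pow8_alpha b m : exists z : Z, INR (8 ^ S m) * alpha b = IZR z + tail b m.
Proof.
  assert (Htail : exists z : Z, 8 ^ m * tail b 0 = IZR z + tail b m).
  { induction m as [|m [z Hz]].
    - exists 0%Z. simpl. ring.
    - exists (8 * z + (if b m then 1 else 0))%Z.
      rewrite plus_IZR, mult_IZR, (tail_succ b m) in *. simpl pow.
      rewrite Rmult_assoc, Hz. destruct (b m); simpl; field. }
  destruct Htail as [z Hz]. exists (Z.of_nat (8 ^ m) + z)%Z.
  rewrite plus_IZR, <- INR_IZR_INZ, Rplus_assoc, <- Hz, !pow_INR.
  replace (INR 8) with 8 by (simpl; ring). unfold alpha. simpl pow. field.
Qed.

Lemma tail_false b m : b m = false -> 0 <= tail b m <= 1/56.
Proof. intros H. rewrite tail_succ, H. pose proof (tail_bounds b (S m)). simpl. lra. Qed.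

Lemma tail_true b m : b m = true -> 1/8 <= tail b m <= 1/8 + 1/56.
Proof. intros H. rewrite tail_succ, H. pose proof (tail_bounds b (S m)). simpl. lra. Qed.

(** * The groups [Gamma b] *)

Definition marker (p : perm3) (x : R) : perm3 := if Rlt_dec x (1/16) then p else e3.

Definition rot (c : R) : I01 -> I01 := skew c (fun _ => e3).
Definition gen_a : I01 -> I01 := skew 0 (marker t01).
Definition gen_c : I01 -> I01 := skew 0 (marker t12).

Lemma rot_comp c d : compI (rot c) (rot d) = rot (d + c).
Proof. unfold rot. rewrite skew_comp. reflexivity. Qed.

Lemma rot_comp_opp c : compI (rot (- c)) (rot c) = idI.
Proof. rewrite rot_comp, Rplus_opp_r. apply skew_id. Qed.

Lemma rot_opp_comp c : compI (rot c) (rot (- c)) = idI.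
Proof. rewrite rot_comp, Rplus_opp_l. apply skew_id. Qed.

Lemma marker_involutive p : perm3_mul p p = e3 ->
  compI (skew 0 (marker p)) (skew 0 (marker p)) = idI.
Proof.
  intros Hp. rewrite skew0_comp, <- skew_id. apply skew_ext; intros x _.
  unfold marker. destruct Rlt_dec; [exact Hp | reflexivity].
Qed.

Lemma gen_a_involutive : compI gen_a gen_a = idI.
Proof. apply marker_involutive. reflexivity. Qed.

Lemma gen_c_involutive : compI gen_c gen_c = idI.
Proof. apply marker_involutive. reflexivity. Qed.

Lemma is_IET_intro f g (n : nat) (a t : nat -> R) :
  compI g f = idI -> compI f g = idI ->
  a 0%nat = 0 -> a n = 1 -> (forall i, (i < n)%nat -> a i < a (S i)) ->
  (forall (x : I01) i, (i < n)%nat -> a i <= proj1_sig x < a (S i) ->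
     proj1_sig (f x) = proj1_sig x + t i) ->
  is_IET f.
Proof.
  intros Hl Hr H0 Hn Hmono Hpiece. split.
  - exists g. split; intros x; [exact (equal_f Hl x) | exact (equal_f Hr x)].
  - exists n, a, t. auto.
Qed.

Ltac solve_piece :=
  rewrite skew_val; unfold base, sheet, sheet_of, marker;
  match goal with x : I01 |- _ => destruct x as [? ?] end; simpl proj1_sig in *;
  repeat (destruct Rlt_dec; simpl INR in *; try (exfalso; lra));
  simpl perm3_app; simpl INR;
  first [rewrite frac_part_id by lra | rewrite (frac_part_eq _ 1) by (simpl; lra); simpl];
  field.

Lemma rot_IET c : 0 < c < 1 -> is_IET (rot c).
Proof.
  intros Hc.
  apply (is_IET_intro _ (rot (- c)) 6
    (fun i => match i with 0%nat => 0 | 1%nat => (1 - c) / 3 | 2%nat => 1/3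
              | 3%nat => (2 - c) / 3 | 4%nat => 2/3 | 5%nat => (3 - c) / 3 | _ => 1 end)
    (fun i => match i with 0%nat | 2%nat | 4%nat => c / 3 | _ => (c - 1) / 3 end));
    [apply rot_comp_opp | apply rot_opp_comp | reflexivity | reflexivity | |].
  - intros i Hi. destruct i as [|[|[|[|[|[|i]]]]]]; try lia; lra.
  - intros x i Hi Hx. unfold rot.
    destruct i as [|[|[|[|[|[|i]]]]]]; try lia; solve_piece.
Qed.

Lemma gen_a_IET : is_IET gen_a.
Proof.
  apply (is_IET_intro _ gen_a 4
    (fun i => match i with 0%nat => 0 | 1%nat => 1/48 | 2%nat => 1/3
              | 3%nat => 1/3 + 1/48 | _ => 1 end)
    (fun i => match i with 0%nat => 1/3 | 2%nat => -1/3 | _ => 0 end));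
    [apply gen_a_involutive | apply gen_a_involutive | reflexivity | reflexivity | |].
  - intros i Hi. destruct i as [|[|[|[|i]]]]; try lia; lra.
  - intros x i Hi Hx. unfold gen_a.
    destruct i as [|[|[|[|i]]]]; try lia; solve_piece.
Qed.

Lemma gen_c_IET : is_IET gen_c.
Proof.
  apply (is_IET_intro _ gen_c 5
    (fun i => match i with 0%nat => 0 | 1%nat => 1/3 | 2%nat => 1/3 + 1/48
              | 3%nat => 2/3 | 4%nat => 2/3 + 1/48 | _ => 1 end)
    (fun i => match i with 1%nat => 1/3 | 3%nat => -1/3 | _ => 0 end));
    [apply gen_c_involutive | apply gen_c_involutive | reflexivity | reflexivity | |].
  - intros i Hi. destruct i as [|[|[|[|[|i]]]]]; try lia; lra.
  - intros x i Hi Hx. unfold gen_c.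
    destruct i as [|[|[|[|[|i]]]]]; try lia; solve_piece.
Qed.

Definition Gamma (b : nat -> bool) : fset :=
  gen (fun h => h = rot (alpha b) \/ h = gen_a \/ h = gen_c).

Lemma Gamma_IET_3gen b : IET_3gen (Gamma b).
Proof.
  pose proof (alpha_range b).
  exists (rot (alpha b)), gen_a, gen_c.
  split; [apply rot_IET; lra | split; [apply gen_a_IET | split; [apply gen_c_IET | intros f; reflexivity]]].
Qed.

Lemma Gamma_skew b f : Gamma b f -> skew_layer 0 f.
Proof.
  apply gen_min; [apply skew_layer_subgroup|].
  intros g [-> | [-> | ->]]; do 2 eexists; reflexivity.
Qed.

Lemma derived_Gamma_2_nontrivial b : ~ trivial_set (derived (Gamma b) 2).
Proof.
  set (s1 := fun x => perm3_commutator (marker t01 x) (marker t12 x)).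
  set (s2 := fun x => perm3_mul (marker t01 x) (marker t01 (frac_part (x - alpha b)))).
  assert (Hr : Gamma b (rot (alpha b))) by (apply gen_base; auto).
  assert (Ha : Gamma b gen_a) by (apply gen_base; auto).
  assert (Hc : Gamma b gen_c) by (apply gen_base; auto).
  assert (H1 : derived (Gamma b) 1 (skew 0 s1)) by (apply gen_base, commutators_skew0; assumption).
  assert (H2 : derived (Gamma b) 1 (skew 0 s2)).
  { apply gen_base. exists gen_a, (rot (alpha b)), gen_a, (rot (- alpha b)).
    repeat split; auto using gen_a_involutive, rot_comp_opp, rot_opp_comp.
    unfold gen_a, rot. rewrite !skew_comp, !Rplus_0_r, Rplus_opp_l.
    apply skew_ext; intros x Hx. unfold s2.
    rewrite Rplus_0_r, (frac_part_id x Hx), perm3_mul_1l, !perm3_mul_1r.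
    reflexivity. }
  intros Htriv.
  assert (H3 : derived (Gamma b) 2 (skew 0 (fun x => perm3_commutator (s1 x) (s2 x))))
    by (apply gen_base, commutators_skew0; assumption).
  apply Htriv in H3. revert H3.
  (* At x = 0: the commutator of the 3-cycle (t01 t12)^2 with t01. *)
  apply (skew_neq_id _ 0); [lra|].
  pose proof (alpha_range b).
  unfold s1, s2, marker. rewrite (frac_part_eq _ (-1)) by (simpl; lra).
  repeat (destruct Rlt_dec; try (exfalso; simpl in *; lra)); discriminate.
Qed.

Lemma Gamma_derived_length b : derived_length_eq (Gamma b) 3.
Proof.
  split.
  - apply derived_skew_3, Gamma_skew.
  - intros j Hj. apply (derived_nontrivial_below _ 2); [apply gen_subgroup | apply derived_Gamma_2_nontrivial | lia].
Qed.

Inductive word := w_one | w_rot | w_rot_inv | w_a | w_c | w_mul (u v : word).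

Fixpoint eval (b : nat -> bool) (w : word) : I01 -> I01 :=
  match w with
  | w_one => idI
  | w_rot => rot (alpha b)
  | w_rot_inv => rot (- alpha b)
  | w_a => gen_a
  | w_c => gen_c
  | w_mul u v => compI (eval b u) (eval b v)
  end.

Fixpoint word_inv (w : word) : word :=
  match w with
  | w_rot => w_rot_inv
  | w_rot_inv => w_rot
  | w_mul u v => w_mul (word_inv v) (word_inv u)
  | _ => w
  end.

Lemma eval_word_inv b w :
  compI (eval b (word_inv w)) (eval b w) = idI /\ compI (eval b w) (eval b (word_inv w)) = idI.
Proof.
  induction w as [| | | | | u [IHu1 IHu2] v [IHv1 IHv2]]; simpl;
    auto using rot_comp_opp, rot_opp_comp, gen_a_involutive, gen_c_involutive.
  split; apply functional_extensionality; intros x.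
  - pose proof (equal_f IHu1 (eval b v x)) as E. unfold compI, idI in E |- *.
    rewrite E. exact (equal_f IHv1 x).
  - pose proof (equal_f IHv2 (eval b (word_inv u) x)) as E. unfold compI, idI in E |- *.
    rewrite E. exact (equal_f IHu2 x).
Qed.

Lemma Gamma_eval b f : Gamma b f <-> exists w, eval b w = f.
Proof.
  split.
  - intros H. induction H as [f Hf | | f g _ [u Hu] _ [v Hv] | f h _ [u Hu] Hl _].
    + destruct Hf as [-> | [-> | ->]]; [exists w_rot | exists w_a | exists w_c]; reflexivity.
    + exists w_one. reflexivity.
    + exists (w_mul u v). simpl. congruence.
    + exists (word_inv u). subst f.
      symmetry. exact (left_inv_eq_right_inv _ _ _ Hl (proj2 (eval_word_inv b u))).
  - intros [w <-]. induction w; simpl.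
    + apply gen_id.
    + apply gen_base; auto.
    + apply (gen_inv _ (rot (alpha b))); [apply gen_base; auto | apply rot_comp_opp | apply rot_opp_comp].
    + apply gen_base; auto.
    + apply gen_base; auto.
    + apply gen_comp; auto.
Qed.

Definition word_subst (u : word * word * word) : word -> word :=
  let '(ur, ua, uc) := u in
  fix subst w :=
    match w with
    | w_one => w_one
    | w_rot => ur
    | w_rot_inv => word_inv ur
    | w_a => ua
    | w_c => uc
    | w_mul v v' => w_mul (subst v) (subst v')
    end.

Lemma hom_id (G H : fset) (phi : (I01 -> I01) -> I01 -> I01) :
  G idI -> (forall f, G f -> H (phi f)) ->
  (forall f g, G f -> G g -> phi (compI f g) = compI (phi f) (phi g)) ->
  (forall h, H h -> exists h', compI h' h = idI) ->
  phi idI = idI.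
Proof.
  intros HG Hmaps Hmul Hinv. destruct (Hinv _ (Hmaps _ HG)) as [h' Hh'].
  assert (Hidem : compI (phi idI) (phi idI) = phi idI) by (symmetry; exact (Hmul _ _ HG HG)).
  transitivity (compI h' (compI (phi idI) (phi idI))).
  - change (phi idI = compI (compI h' (phi idI)) (phi idI)). rewrite Hh'. reflexivity.
  - rewrite Hidem. exact Hh'.
Qed.

Lemma group_iso_relations j k : group_iso (Gamma j) (Gamma k) ->
  exists u, forall w, eval j w = idI <-> eval k (word_subst u w) = idI.
Proof.
  intros (phi & Hmaps & Hmul & Hinj & _).
  assert (Hin : forall w, Gamma j (eval j w)) by (intros w; apply Gamma_eval; eauto).
  destruct (proj1 (Gamma_eval k _) (Hmaps _ (Hin w_rot))) as [ur Hr].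
  destruct (proj1 (Gamma_eval k _) (Hmaps _ (Hin w_a))) as [ua Ha].
  destruct (proj1 (Gamma_eval k _) (Hmaps _ (Hin w_c))) as [uc Hc].
  assert (Hid : phi idI = idI).
  { apply (hom_id _ _ _ (Hin w_one) Hmaps Hmul).
    intros h Hh. destruct (proj1 (Gamma_eval k h) Hh) as [w <-].
    exists (eval k (word_inv w)). apply eval_word_inv. }
  exists (ur, ua, uc).
  assert (Hphi : forall w, phi (eval j w) = eval k (word_subst (ur, ua, uc) w)).
  { induction w as [| | | | | v IHv v' IHv']; simpl; auto.
    - apply (left_inv_eq_right_inv (eval k ur)); [| apply (proj2 (eval_word_inv k ur))].
      rewrite Hr. simpl. rewrite <- (Hmul (rot (- alpha j)) (rot (alpha j)) (Hin w_rot_inv) (Hin w_rot)).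
      rewrite rot_comp_opp. exact Hid.
    - rewrite Hmul, IHv, IHv' by apply Hin. reflexivity. }
  intros w. rewrite <- Hphi. split.
  - intros E. rewrite E. exact Hid.
  - intros E. apply Hinj; [apply Hin | apply (Hin w_one) | rewrite E; auto].
Qed.

Fixpoint word_pow (w : word) (n : nat) : word :=
  match n with 0%nat => w_one | S n => w_mul w (word_pow w n) end.

Definition word_conj_rot (n : nat) (w : word) : word :=
  w_mul (word_pow w_rot n) (w_mul w (word_pow w_rot_inv n)).

(* The marker interval of the conjugate of [c] is [0,1/16) moved by
   8^(m+1) alpha b = tail b m (mod 1); it misses that of [a] exactly when b m = true. *)
Definition witness (m : nat) : word :=
  let x := word_conj_rot (8 ^ S m) w_c in w_mul w_a (w_mul x (w_mul w_a x)).

Lemma eval_word_pow b w c n : eval b w = rot c -> eval b (word_pow w n) = rot (INR n * c).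
Proof.
  intros Hw. induction n as [|n IH]; cbn [word_pow eval].
  - rewrite Rmult_0_l. symmetry. apply skew_id.
  - rewrite Hw, IH, rot_comp, S_INR. f_equal. ring.
Qed.

Lemma eval_conj_rot_c b n :
  eval b (word_conj_rot n w_c) = skew 0 (fun x => marker t12 (frac_part (x - INR n * alpha b))).
Proof.
  cbn [word_conj_rot eval].
  rewrite (eval_word_pow b w_rot (alpha b)), (eval_word_pow b w_rot_inv (- alpha b)) by reflexivity.
  unfold rot, gen_c. rewrite !skew_comp.
  replace (INR n * - alpha b + 0 + INR n * alpha b) with 0 by ring.
  apply skew_ext; intros x _.
  rewrite perm3_mul_1l, perm3_mul_1r. do 2 f_equal. ring.
Qed.

Lemma eval_witness b m :
  eval b (witness m) =
  skew 0 (fun x => perm3_mul (marker t01 x) (perm3_mul (marker t12 (frac_part (x - tail b m)))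
                   (perm3_mul (marker t01 x) (marker t12 (frac_part (x - tail b m)))))).
Proof.
  unfold witness. cbn [eval]. rewrite eval_conj_rot_c. unfold gen_a. rewrite !skew0_comp.
  destruct (pow8_alpha b m) as [z ->].
  apply skew_ext; intros x _. rewrite frac_part_sub_int. reflexivity.
Qed.

Lemma witness_true b m : b m = true -> eval b (witness m) = idI.
Proof.
  intros Hb. pose proof (tail_true b m Hb).
  rewrite eval_witness, <- skew_id. apply skew_ext; intros x Hx.
  unfold marker. destruct (Rlt_dec x (1/16)).
  - rewrite (frac_part_eq _ (-1)) by (simpl; lra).
    destruct Rlt_dec; [simpl in *; lra | reflexivity].
  - destruct Rlt_dec; reflexivity.
Qed.

Lemma witness_false b m : b m = false -> eval b (witness m) <> idI.
Proof.
  intros Hb. pose proof (tail_false b m Hb).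
  rewrite eval_witness. apply (skew_neq_id _ (tail b m)); [lra|].
  rewrite Rminus_diag, frac_part_id by lra.
  unfold marker. repeat (destruct Rlt_dec; try lra). discriminate.
Qed.

Definition decode (b : nat -> bool) (u : word * word * word) : nat -> bool :=
  fun m => if excluded_middle_informative (eval b (word_subst u (witness m)) = idI)
           then true else false.

Lemma group_iso_decode b b' : group_iso (Gamma b) (Gamma b') -> exists u, b = decode b' u.
Proof.
  intros Hiso. destruct (group_iso_relations _ _ Hiso) as [u Hu]. exists u.
  apply functional_extensionality; intros m. unfold decode.
  destruct excluded_middle_informative as [E | E]; rewrite <- Hu in E;
    destruct (b m) eqn:Hb; try reflexivity; exfalso.
  - exact (witness_false b m Hb E).
  - exact (E (witness_true b m Hb)).
Qed.

(** * Counting isomorphism classes *)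

Fixpoint word_code (w : word) : nat :=
  match w with
  | w_one => Cantor.to_nat (0, 0)
  | w_rot => Cantor.to_nat (0, 1)
  | w_rot_inv => Cantor.to_nat (0, 2)
  | w_a => Cantor.to_nat (0, 3)
  | w_c => Cantor.to_nat (0, 4)
  | w_mul u v => Cantor.to_nat (S (word_code u), word_code v)
  end%nat.

Lemma word_code_inj w w' : word_code w = word_code w' -> w = w'.
Proof.
  revert w'. induction w; intros [] E; cbn [word_code] in E;
    apply Cantor.to_nat_inj in E; inversion E; try reflexivity.
  f_equal; auto.
Qed.

Definition triple_code (u : word * word * word) : nat :=
  let '(ur, ua, uc) := u in Cantor.to_nat (word_code ur, Cantor.to_nat (word_code ua, word_code uc)).

Lemma triple_code_inj u u' : triple_code u = triple_code u' -> u = u'.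
Proof.
  destruct u as [[ur ua] uc], u' as [[ur' ua'] uc']. unfold triple_code. intros E.
  apply Cantor.to_nat_inj, pair_equal_spec in E as [Er E].
  apply Cantor.to_nat_inj, pair_equal_spec in E as [Ea Ec].
  apply word_code_inj in Er, Ea, Ec. subst. reflexivity.
Qed.

Lemma no_injection_bool_seq_nat (e : (nat -> bool) -> nat) : ~ (forall x y, e x = e y -> x = y).
Proof.
  intros He.
  set (g := fun n => epsilon (inhabits (fun _ : nat => false)) (fun f => e f = n)).
  set (d := fun n => negb (g n n)).
  assert (Hg : g (e d) = d).
  { apply He. exact (epsilon_spec _ (fun f => e f = e d) (ex_intro _ d eq_refl)). }
  assert (Hd : d (e d) = negb (d (e d))) by (unfold d at 1; rewrite Hg; reflexivity).
  destruct (d (e d)); discriminate.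
Qed.

Lemma uncountably_many_classes (sim : (nat -> bool) -> (nat -> bool) -> Prop) (U : Type) (code : U -> nat)
    (decode : (nat -> bool) -> U -> nat -> bool) :
  Equivalence sim -> (forall u v, code u = code v -> u = v) ->
  (forall b b', sim b b' -> exists u, b = decode b' u) ->
  exists (J : Type) (rep : J -> nat -> bool),
    uncountable J /\ forall j k, sim (rep j) (rep k) -> j = k.
Proof.
  intros HR Hcode Hdecode.
  set (J := {P : (nat -> bool) -> Prop | exists b, P = sim b}).
  set (rep := fun j : J => proj1_sig (constructive_indefinite_description _ (proj2_sig j))).
  assert (Hrep : forall j, proj1_sig j = sim (rep j))
    by (intros j; exact (proj2_sig (constructive_indefinite_description _ (proj2_sig j)))).
  exists J, rep. split.
  - intros [e He].
    set (cls := fun b => exist _ (sim b) (ex_intro _ b eq_refl) : J).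
    assert (Hu : forall b, exists u, b = decode (rep (cls b)) u).
    { intros b. apply Hdecode. change (proj1_sig (cls b) (rep (cls b))).
      rewrite Hrep. reflexivity. }
    set (u := fun b => proj1_sig (constructive_indefinite_description _ (Hu b))).
    assert (Hu_spec : forall b, b = decode (rep (cls b)) (u b))
      by (intros b; exact (proj2_sig (constructive_indefinite_description _ (Hu b)))).
    apply (no_injection_bool_seq_nat (fun b => Cantor.to_nat (e (cls b), code (u b)))).
    intros b b' E. apply Cantor.to_nat_inj, pair_equal_spec in E as [Ecls Eu].
    apply He in Ecls. apply Hcode in Eu.
    rewrite (Hu_spec b), (Hu_spec b'), Ecls, Eu. reflexivity.
  - intros j k Hjk.
    assert (E : proj1_sig j = proj1_sig k).
    { rewrite !Hrep. apply functional_extensionality; intros b.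
      apply propositional_extensionality. split; intros H.
      - symmetry in Hjk. transitivity (rep j); assumption.
      - transitivity (rep k); assumption. }
    destruct j as [P HP], k as [Q HQ]. simpl in E. subst Q.
    f_equal. apply proof_irrelevance.
Qed.

Lemma group_iso_refl G : group_iso G G.
Proof. exists (fun f => f). repeat split; auto. intros h Hh; exists h; auto. Qed.

Lemma group_iso_trans G H K : group_iso G H -> group_iso H K -> group_iso G K.
Proof.
  intros (p & p1 & p2 & p3 & p4) (q & q1 & q2 & q3 & q4).
  exists (fun f => q (p f)). repeat split.
  - auto.
  - intros f g Hf Hg. rewrite p2 by auto. apply q2; auto.
  - intros f g Hf Hg E. apply p3; auto.
  - intros h Hh. destruct (q4 h Hh) as (g & Hg & <-). destruct (p4 g Hg) as (f & Hf & <-).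
    eauto.
Qed.

Lemma group_iso_sym G H :
  (forall f g, G f -> G g -> G (compI f g)) -> group_iso G H -> group_iso H G.
Proof.
  intros HG (p & p1 & p2 & p3 & p4).
  set (psi := fun h => epsilon (inhabits idI) (fun f => G f /\ p f = h)).
  assert (Hpsi : forall h, H h -> G (psi h) /\ p (psi h) = h)
    by (intros h Hh; apply epsilon_spec; auto).
  exists psi. repeat split.
  - intros h Hh. apply Hpsi; auto.
  - intros h1 h2 H1 H2. destruct (Hpsi _ H1) as [G1 E1], (Hpsi _ H2) as [G2 E2].
    assert (H12 : H (compI h1 h2)) by (rewrite <- E1, <- E2, <- p2 by auto; apply p1; auto).
    destruct (Hpsi _ H12) as [G12 E12].
    apply p3; auto. rewrite E12, p2, E1, E2 by auto. reflexivity.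
  - intros h1 h2 H1 H2 E. rewrite <- (proj2 (Hpsi _ H1)), <- (proj2 (Hpsi _ H2)), E.
    reflexivity.
  - intros f Hf. exists (p f). split; [auto|].
    destruct (Hpsi (p f) (p1 f Hf)) as [G1 E1]. apply p3; auto.
Qed.

Lemma Gamma_iso_equivalence : Equivalence (fun b b' => group_iso (Gamma b) (Gamma b')).
Proof.
  split.
  - intros b. apply group_iso_refl.
  - intros b b'. apply group_iso_sym. intros f g. apply gen_comp.
  - intros b b' b''. apply group_iso_trans.
Qed.

Theorem mainTheorem4 :
  exists (J : Type) (F : J -> fset),
    uncountable J /\
    (forall j, IET_3gen (F j) /\ derived_length_eq (F j) 3) /\
    (forall j k, j <> k -> ~ group_iso (F j) (F k)).
Proof.
  destruct (uncountably_many_classes _ _ triple_code decode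
              Gamma_iso_equivalence triple_code_inj group_iso_decode) as (J & rep & HJ & Hrep).
  exists J, (fun j => Gamma (rep j)). split; [exact HJ | split].
  - intros j. split; [apply Gamma_IET_3gen | apply Gamma_derived_length].
  - intros j k Hjk Hiso. exact (Hjk (Hrep j k Hiso)).
Qed.
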